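(* Let $W$ be a well generated complex reflection group and $W_X\le W$ a parabolic subgroup. Then an element $g\in W_X$ is parabolic quasi-Coxeter in $W_X$ if and only if it is parabolic quasi-Coxeter in $W$.
   Context: A complex reflection group $W\le\mathrm{GL}(V)$ is a finite group generated by unitary reflections; its rank is $\operatorname{codim}(V^W)$. A good generating set of a reflection group $G$ is a set of $\operatorname{rank}(G)$ reflections generating $G$; $W$ is well generated if it has one. Parabolic subgroups are pointwise stabilizers of subsets of $V$ (parabolic subgroups of well generated groups are well generated). $\ell_R$ denotes reflection length; a reflection factorization is reduced if its length equals $\ell_R$ of its product (computed in the ambient group considered). An element $g$ of a well generated group $G$ is parabolic quasi-Coxeter in $G$ if some reduced reflection factorization of $g$ in $G$ has factors forming a good generating set of some parabolic subgroup of $G$. *)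

From mathcomp Require Import all_boot all_algebra all_fingroup all_solvable all_field all_character.
Set Implicit Arguments. Unset Strict Implicit. Unset Printing Implicit Defensive.
Import GRing.Theory.
Local Open Scope ring_scope.

(* A complex reflection group W <= GL(V), V = row vectors 'rV_n, is modelled
   as a finite group W together with a faithful matrix representation rG
   (row vectors act on the right: v |-> v *m rG g). *)
Section ReflectionGroups.
Variables (F : fieldType) (gT : finGroupType) (G : {group gT}) (n : nat).
Variable rG : mx_representation F G n.

(* g is a reflection: its fixed space is a hyperplane, i.e. rank (g - 1) = 1 *)
Definition is_reflection (g : gT) : bool :=
  (g \in G) && (\rank (rG g - 1%:M) == 1%N).

Definition reflections (H : {set gT}) : {set gT} :=
  [set g in H | is_reflection g].

Definition refl_rank (H : {set gT}) : nat := (n - \rank (rfix_mx rG H))%N.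

Definition reflection_group (H : {set gT}) : Prop :=
  H = <<reflections H>>%g.

Definition good_gen_set (H T : {set gT}) : Prop :=
  [/\ T \subset reflections H, #|T| = refl_rank H & <<T>>%g = H].

Definition well_generated (H : {set gT}) : Prop :=
  exists T : {set gT}, good_gen_set H T.

Definition parabolic_in (H P : {set gT}) : Prop :=
  exists (m : nat) (U : 'M[F]_(m, n)), P = (rstab rG U :&: H)%g.

Definition refl_fact (H : {set gT}) (g : gT) (s : seq gT) : Prop :=
  all (fun t => t \in reflections H) s /\ (\prod_(t <- s) t)%g = g.

Definition reduced_refl_fact (H : {set gT}) (g : gT) (s : seq gT) : Prop :=
  refl_fact H g s /\ forall s', refl_fact H g s' -> (size s <= size s')%N.

Definition parabolic_quasi_coxeter (H : {set gT}) (g : gT) : Prop :=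
  exists s : seq gT, reduced_refl_fact H g s /\
    exists P : {set gT}, parabolic_in H P /\ good_gen_set P [set t in s].

End ReflectionGroups.

From mathcomp Require Import all_boot all_algebra all_fingroup all_solvable all_field all_character.
From mathcomp Require Import zify.
Set Implicit Arguments. Unset Strict Implicit. Unset Printing Implicit Defensive.
Import GRing.Theory Num.Theory.
Local Open Scope ring_scope.

(* A reduced reflection factorization has no repeated factor, since a repetition
   t ... t can be removed by conjugating the factors in between by t.  So if the
   factors of a reduced factorization [s] of [g] form a good generating set of a
   parabolic [P], then [size s = codim V^P]; averaging over [P] shows that the
   images of the [t - 1], [t] in [s], span a complement of [V^P], hence their sum
   is direct.  Directness forces every vector fixed by [g] to be fixed by every
   factor, so [V^g <= V^P] and [size s = rank (g - 1)], a lower bound for the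
   reflection length in any group.  Hence [s] stays reduced in [W], and when [g]
   fixes [U] pointwise so do its factors, i.e. they lie in [W_X].  Finally the
   parabolic subgroups of [W_X] are the parabolic subgroups of [W] inside [W_X]. *)

Lemma group_prod_seq (gT : finGroupType) (G : {group gT}) (s : seq gT) :
  all [in G] s -> (\prod_(t <- s) t)%g \in G.
Proof. by move=> Gs; rewrite big_seq group_prod // => t /(allP Gs). Qed.

Lemma prod_mulg_conj (gT : finGroupType) (s : seq gT) (t : gT) :
  ((\prod_(u <- s) u) * t = t * \prod_(u <- s) u ^ t)%g.
Proof. by rewrite conjgC (big_morph (conjg^~ t) (fun x y => conjMg x y t) (conj1g t)). Qed.

Section RootSpace.

Variables (F : fieldType) (gT : finGroupType) (G : {group gT}) (n : nat).
Variable rG : mx_representation F G n.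

Definition root_space (s : seq gT) : 'M[F]_n := (\sum_(t <- s) (rG t - 1%:M))%MS.

Lemma repr_mxM_sub1 x y : x \in G -> y \in G ->
  rG (x * y)%g - 1%:M = (rG x - 1%:M) + rG x *m (rG y - 1%:M).
Proof. by move=> Gx Gy; rewrite repr_mxM // mulmxBr mulmx1 [RHS]addrC addrA subrK. Qed.

Lemma root_space_cons t s :
  root_space (t :: s) = (rG t - 1%:M + root_space s)%MS.
Proof. exact: big_cons. Qed.

Lemma sub1_sub_root_space s t : t \in s -> (rG t - 1%:M <= root_space s)%MS.
Proof.
elim: s => [|u s IHs] //; rewrite inE root_space_cons => /predU1P[-> | st].
  exact: addsmxSl.
exact: submx_trans (IHs st) (addsmxSr _ _).
Qed.

Lemma prod_sub1_sub_root_space s : all [in G] s ->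
  (rG (\prod_(t <- s) t)%g - 1%:M <= root_space s)%MS.
Proof.
elim: s => [|t s IHs] /=; first by rewrite big_nil repr_mx1 subrr sub0mx.
case/andP=> Gt Gs; rewrite big_cons root_space_cons repr_mxM_sub1 ?group_prod_seq //.
exact: addmx_sub_adds (submx_trans (submxMl _ _) (IHs Gs)).
Qed.

Lemma mxrank_root_space_le s :
  {in s, forall t, \rank (rG t - 1%:M)%R <= 1}%N -> (\rank (root_space s) <= size s)%N.
Proof.
elim: s => [|t s IHs] rk1; first by rewrite /root_space big_nil mxrank0.
rewrite root_space_cons; apply: leq_trans (mxrank_adds_leqif _ _).1 _.
rewrite /= -add1n leq_add ?rk1 ?mem_head // IHs // => u su.
by rewrite rk1 // inE su orbT.
Qed.

(* When the rank bound of [mxrank_root_space_le] is attained the sum defining the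
   root space is direct, so a vector fixed by the product is fixed by each factor. *)
Lemma root_space_fixed_factors s m (V : 'M[F]_(m, n)) :
  all [in G] s -> {in s, forall t, \rank (rG t - 1%:M)%R <= 1}%N ->
  \rank (root_space s) = size s -> V *m rG (\prod_(t <- s) t)%g = V ->
  {in s, forall t, V *m rG t = V}.
Proof.
have fixE A : (V *m A == V) = (V *m (A - 1%:M) == 0).
  by rewrite mulmxBr mulmx1 subr_eq0.
elim: s => [|t s IHs] //= /andP[Gt Gs] rk1 rk_ts /eqP.
have rk1s : {in s, forall u, \rank (rG u - 1%:M)%R <= 1}%N.
  by move=> u su; rewrite rk1 // inE su orbT.
have rk_t := rk1 t (mem_head t s).
have rk_s_le : (\rank (root_space s) <= size s)%N := mxrank_root_space_le rk1s.
move: rk_ts; rewrite root_space_cons /= => rk_ts.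
have rk_sum : ((size s).+1 + \rank ((rG t - 1%:M)%R :&: root_space s)%MS =
    \rank (rG t - 1%:M)%R + \rank (root_space s))%N.
  by rewrite -rk_ts mxrank_sum_cap.
have cap0 : \rank ((rG t - 1%:M)%R :&: root_space s)%MS = 0%N :> nat by lia.
have rk_s : \rank (root_space s) = size s :> nat by lia.
rewrite big_cons fixE repr_mxM_sub1 ?group_prod_seq // mulmxDr mulmxA addr_eq0.
move=> /eqP Vt_eq.
have Vt : V *m rG t = V.
  apply/eqP; rewrite fixE -mxrank_eq0 -leqn0 -cap0 mxrankS // sub_capmx submxMl.
  by rewrite Vt_eq eqmx_opp (submx_trans (submxMl _ _)) ?prod_sub1_sub_root_space.
have Vp : V *m rG (\prod_(u <- s) u)%g = V.
  move: Vt_eq; rewrite Vt [in LHS]mulmxBr mulmx1 Vt subrr => /esym/eqP.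
  by rewrite oppr_eq0 -fixE => /eqP.
by move=> u; rewrite inE => /predU1P[-> // | su]; apply: IHs.
Qed.

Lemma sub1_sub_gen (T : {set gT}) (R : 'M[F]_n) :
  T \subset G -> {in T, forall t, (rG t - 1%:M <= R)%MS} ->
  {in <<T>>%g, forall p, (rG p - 1%:M <= R)%MS}.
Proof.
move=> sTG sT1R _ /gen_prodgP[k [c Tc ->]].
rewrite -[X in rG X](big_map c xpredT id).
apply: submx_trans (prod_sub1_sub_root_space _) _.
  by apply/allP=> _ /mapP[i _ ->]; apply: (subsetP sTG).
by rewrite /root_space big_map; apply/sumsmx_subP=> i _; apply: sT1R.
Qed.

Lemma mxrank_rfix_add_ge (P : {group gT}) (R : 'M[F]_n) :
  P \subset G -> (#|P|%:R : F) != 0 -> {in P, forall p, (rG p - 1%:M <= R)%MS} ->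
  (n <= \rank (rfix_mx rG P) + \rank R)%N.
Proof.
move=> sPG nzP sP1R; pose c : F := #|P|%:R^-1; pose e := \sum_(p in P) rG p.
(* [c *: e] averages [rG] over [P]: its rows are fixed by [P], and
   [1 - c *: e] is the average of the [1 - rG p]. *)
have ce_fix : (c *: e <= rfix_mx rG P)%MS.
  apply/rfix_mxP=> x Px; rewrite -scalemxAl mulmx_suml; congr (_ *: _).
  rewrite [RHS](reindex_inj (mulIg x)) /=; apply: eq_big => [p | p Pp].
    by rewrite groupMr.
  by rewrite repr_mxM ?(subsetP sPG).
have one_ce : (1%:M - c *: e <= R)%MS.
  have -> : 1%:M - c *: e = c *: \sum_(p in P) (1%:M - rG p).
    by rewrite sumrB sumr_const scalerBr -scalerMnr scalerMnl -mulr_natr mulVf // scale1r.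
  by apply/scalemx_sub/summx_sub=> p Pp; rewrite -opprB eqmx_opp sP1R.
have full : (1%:M <= rfix_mx rG P + R)%MS.
  by rewrite -(subrK (c *: e) 1%:M) addrC addmx_sub_adds.
by rewrite -{1}(mxrank1 F n); apply: leq_trans (mxrankS full) (mxrank_adds_leqif _ _).1.
Qed.

Lemma mxrank_conj_sub1 x y : x \in G -> y \in G ->
  \rank (rG (x ^ y)%g - 1%:M) = \rank (rG x - 1%:M).
Proof.
move=> Gx Gy; have Gy' : y^-1%g \in G by rewrite groupV.
have -> : rG (x ^ y)%g - 1%:M = rG y^-1%g *m ((rG x - 1%:M) *m rG y).
  rewrite conjgE !repr_mxM ?groupM // mulmxBl mul1mx mulmxBr mulmxA.
  by rewrite -[rG y^-1%g *m rG y]repr_mxM // mulVg repr_mx1.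
by rewrite eqmxMfull ?mxrankMfree ?repr_mx_free // row_full_unit repr_mx_unit.
Qed.

End RootSpace.

Section ReflectionFactorizations.

Variables (F : fieldType) (gT : finGroupType) (G : {group gT}) (n : nat).
Variable rG : mx_representation F G n.
Hypothesis faithful : mx_faithful rG.

Lemma reflectionsS (H K : {set gT}) :
  H \subset K -> reflections rG H \subset reflections rG K.
Proof.
by move=> sHK; apply/subsetP=> t; rewrite !inE => /andP[/(subsetP sHK) ->].
Qed.

Lemma refl_factS (H K : {set gT}) g s :
  H \subset K -> refl_fact rG H g s -> refl_fact rG K g s.
Proof.
move=> /reflectionsS/subsetP sHK [Rs def_g]; split=> //.
by apply/allP=> t /(allP Rs)/sHK.
Qed.

Lemma reduced_refl_fact_restrict (H K : {set gT}) g s : H \subset K ->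
  {subset s <= H} -> reduced_refl_fact rG K g s -> reduced_refl_fact rG H g s.
Proof.
move=> sHK sH [[Rs def_g] min_s]; split=> [|s' /(refl_factS sHK)/min_s //].
split=> //; apply/allP=> t st; move/allP/(_ t st): Rs.
by rewrite !inE sH // => /andP[].
Qed.

Lemma mxrank_sub1_le_refl_fact (H : {set gT}) g s :
  refl_fact rG H g s -> (\rank (rG g - 1%:M)%R <= size s)%N.
Proof.
case=> Rs <-; have Gs : all [in G] s.
  by apply/allP=> t /(allP Rs); rewrite inE => /and3P[].
apply: leq_trans (mxrankS (prod_sub1_sub_root_space rG Gs)) _.
by apply: mxrank_root_space_le => t /(allP Rs); rewrite inE => /and3P[_ _ /eqP->].
Qed.

Lemma rstab_col_mx m1 m2 (U1 : 'M[F]_(m1, n)) (U2 : 'M[F]_(m2, n)) :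
  rstab rG (col_mx U1 U2) = (rstab rG U1 :&: rstab rG U2)%g.
Proof.
apply/setP=> x; rewrite !inE mul_col_mx; case: (x \in G) => //=.
by apply/eqP/andP=> [/eq_col_mx[-> ->] | [/eqP-> /eqP->]].
Qed.

Lemma parabolic_in_trans (X P : {set gT}) :
  parabolic_in rG G X -> parabolic_in rG X P -> parabolic_in rG G P.
Proof.
case=> m [U ->] [m' [U' ->]].
by exists (m' + m)%N, (col_mx U' U); rewrite rstab_col_mx setIA.
Qed.

Lemma parabolic_in_sub (X P : {set gT}) :
  X \subset G -> P \subset X -> parabolic_in rG G P -> parabolic_in rG X P.
Proof.
move=> sXG sPX [m [U def_P]]; exists m, U.
by rewrite -(setIidPl sPX) def_P -setIA (setIidPr sXG).
Qed.

Variable H : {group gT}.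

Lemma reflectionsJ x y :
  x \in reflections rG H -> y \in reflections rG H -> (x ^ y)%g \in reflections rG H.
Proof.
rewrite !inE /is_reflection => /and3P[Hx Gx rk_x] /and3P[Hy Gy _].
by rewrite !groupJ //= mxrank_conj_sub1.
Qed.

Lemma reflection_sqr t :
  t \in reflections rG H -> (t * t != 1)%g -> (t * t)%g \in reflections rG H.
Proof.
rewrite !inE /is_reflection => /and3P[Ht Gt /eqP rk_t] ntt.
rewrite !groupM //= eqn_leq; apply/andP; split.
  have -> : rG (t * t)%g - 1%:M = (rG t + 1%:M) *m (rG t - 1%:M).
    by rewrite repr_mxM // mulmxBr mulmx1 mulmxDl mul1mx opprD addrA addrK.
  by rewrite -rk_t mxrankM_maxr.
rewrite lt0n mxrank_eq0 subr_eq0; apply: contra ntt => /eqP rG_tt1.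
by apply/eqP/(mx_faithful_inj faithful); rewrite ?groupM ?repr_mx1.
Qed.

Lemma refl_fact_shorten g s : refl_fact rG H g s -> ~~ uniq s ->
  exists2 s', refl_fact rG H g s' & (size s' < size s)%N.
Proof.
elim: s g => [|t s IHs] g // [/andP[Rt Rs] def_g]; rewrite /= negb_and negbK.
have {}Rs : all [in reflections rG H] s := Rs.
case/orP=> [ts | /(IHs _ (conj Rs erefl))[s' [Rs' def_s'] lt_s's]]; last first.
  exists (t :: s') => //; split; first by rewrite /= Rt.
  by rewrite big_cons def_s' -def_g big_cons.
case/splitPr: ts Rs def_g => s2 s3; rewrite all_cat => /and3P[Rs2 _ Rs3] def_g.
pose tt := if (t * t == 1)%g then [::] else [:: (t * t)%g].
have Rtt : all [in reflections rG H] tt.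
  by rewrite /tt; case: eqP => // /eqP ntt; rewrite /= reflection_sqr.
have prod_tt : (\prod_(u <- tt) u)%g = (t * t)%g.
  by rewrite /tt; case: eqP => [-> | _]; rewrite ?big_nil ?big_seq1.
exists (tt ++ map (conjg^~ t) s2 ++ s3); last first.
  by rewrite !size_cat size_map /= /tt; case: eqP; rewrite /= addnS ltnS ?leqnSn.
split.
  rewrite !all_cat Rtt all_map /=; apply/andP; split; last exact: Rs3.
  by apply/allP=> u s2u; rewrite /= reflectionsJ //; move/allP: Rs2; apply.
rewrite -def_g !big_cat big_map /= prod_tt !big_cons big_cat big_cons /=.
by rewrite (mulgA (\prod_(u <- s2) u)%g) prod_mulg_conj !mulgA.
Qed.

Lemma reduced_refl_fact_uniq g s : reduced_refl_fact rG H g s -> uniq s.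
Proof.
case=> fact_s min_s; apply/negPn/negP=> /(refl_fact_shorten fact_s)[s' fact_s'].
by rewrite ltnNge min_s.
Qed.

End ReflectionFactorizations.

Section QuasiCoxeterElements.

Variables (F : numFieldType) (gT : finGroupType) (G : {group gT}) (n : nat).
Variable rG : mx_representation F G n.
Hypothesis faithful : mx_faithful rG.

Variables (H : {group gT}) (P : {set gT}) (g : gT) (s : seq gT).
Hypotheses (red_s : reduced_refl_fact rG H g s) (good_s : good_gen_set rG P [set t in s]).

Let Gs : all [in G] s.
Proof. by apply/allP=> t /(allP red_s.1.1); rewrite inE => /and3P[]. Qed.

Let rank1_s : {in s, forall t, \rank (rG t - 1%:M)%R <= 1}%N.
Proof. by move=> t /(allP red_s.1.1); rewrite inE => /and3P[_ _ /eqP->]. Qed.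

Let card_s : #|[set t in s]| = size s.
Proof. by rewrite cardsE; apply/card_uniqP/(reduced_refl_fact_uniq faithful red_s). Qed.

Let sTG : [set t in s] \subset G.
Proof. by apply/subsetP=> t; rewrite inE => /(allP Gs). Qed.

Lemma quasi_coxeter_root_space : \rank (root_space rG s) = size s.
Proof.
have [_ rank_P gen_P] := good_s.
have sPG : <<[set t in s]>>%G \subset G by rewrite gen_subG.
apply/eqP; rewrite eqn_leq mxrank_root_space_le // -card_s rank_P leq_subLR -gen_P.
apply: (mxrank_rfix_add_ge sPG); first by rewrite pnatr_eq0 -lt0n cardG_gt0.
by apply: sub1_sub_gen sTG _ => t; rewrite inE; apply: sub1_sub_root_space.
Qed.

Let Gg : g \in G.
Proof. by rewrite -red_s.1.2 group_prod_seq. Qed.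

Lemma quasi_coxeter_rstab m (U : 'M[F]_(m, n)) :
  g \in rstab rG U -> {subset s <= rstab rG U}.
Proof.
rewrite inE => /andP[_ /eqP Ug] t st; rewrite inE (allP Gs t st) /=; apply/eqP.
apply: root_space_fixed_factors Gs rank1_s quasi_coxeter_root_space _ t st.
by rewrite red_s.1.2.
Qed.

Lemma quasi_coxeter_rank : \rank (rG g - 1%:M) = size s.
Proof.
have [_ rank_P gen_P] := good_s.
have sPker : P \subset rstab rG (kermx (rG g - 1%:M)).
  rewrite -gen_P gen_subG; apply/subsetP=> t; rewrite inE; apply: quasi_coxeter_rstab.
  by rewrite inE Gg -[X in _ == X]mulmx1 -subr_eq0 -mulmxBr mulmx_ker eqxx.
have ker_fix : (kermx (rG g - 1%:M) <= rfix_mx rG P)%MS.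
  by apply/rfix_mxP=> x /(subsetP sPker); rewrite inE => /andP[_ /eqP].
apply/eqP; rewrite eqn_leq (mxrank_sub1_le_refl_fact red_s.1) -card_s rank_P.
by rewrite leq_subCl -mxrank_ker mxrankS.
Qed.

Lemma quasi_coxeter_reduced (K : {set gT}) :
  refl_fact rG K g s -> reduced_refl_fact rG K g s.
Proof.
by move=> fact_s; split=> // s' /mxrank_sub1_le_refl_fact; rewrite quasi_coxeter_rank.
Qed.

End QuasiCoxeterElements.

Theorem mainTheorem6 (C : numClosedFieldType) (gT : finGroupType)
    (W : {group gT}) (n : nat) (rW : mx_representation C W n)
    (X : {set gT}) (g : gT) :
  mx_faithful rW ->
  reflection_group rW W ->
  well_generated rW W ->
  parabolic_in rW W X ->
  g \in X ->
  parabolic_quasi_coxeter rW X g <-> parabolic_quasi_coxeter rW W g.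
Proof.
move=> faithful _ _ parX Xg; have [m [U defX]] := parX; subst X.
have sXW : rstab rW U :&: W \subset W := subsetIr _ _.
split=> -[s [red_s [P [parP good_s]]]]; exists s.
  split; first exact: (quasi_coxeter_reduced faithful red_s good_s (refl_factS sXW red_s.1)).
  by exists P; split=> //; apply: parabolic_in_trans parX parP.
have Ug : g \in rstab rW U by case/setIP: Xg.
have sSX : {subset s <= rstab rW U :&: W}.
  move=> t /(quasi_coxeter_rstab faithful red_s good_s Ug) Ut.
  by rewrite inE Ut (subsetP (rstab_sub rW U)).
split; first exact: reduced_refl_fact_restrict sXW sSX red_s.
exists P; split=> //; apply: parabolic_in_sub sXW _ parP.
by have [_ _ <-] := good_s; rewrite gen_subG; apply/subsetP=> t; rewrite inE => /sSX.
Qed.
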